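(* Let $p \ge 1$ be an integer. The functions $\overline{\Delta}_{\mathrm{JML1}}$ and $\overline{\Delta}_{\mathrm{JML2}}$ (defined below) are both metrics on $[0,1]^p$. Neither $\overline{\Delta}_{\mathrm{SJL},L^1}$ nor $\overline{\Delta}_{\mathrm{SJL},L^2}$ (defined below) is a metric on $[0,1]^p$.
   Context: For $x,y \in [0,1]^p$ write $\|x\|_1=\sum_{i=1}^p |x_i|$, $\|x\|_2^2=\sum_{i=1}^p x_i^2$ and $\langle x,y\rangle=\sum_{i=1}^p x_iy_i$. Define, for $x,y\in[0,1]^p$: $\overline{\Delta}_{\mathrm{JML1}}(x,y) = 1 - \frac{\|x\|_1+\|y\|_1-\|x-y\|_1}{\|x\|_1+\|y\|_1+\|x-y\|_1}$, $\overline{\Delta}_{\mathrm{JML2}}(x,y) = 1 - \frac{\langle x,y\rangle}{\langle x,y\rangle+\|x-y\|_1}$, $\overline{\Delta}_{\mathrm{SJL},L^1}(x,y) = 1 - \frac{\langle x,y\rangle}{\|x\|_1+\|y\|_1-\langle x,y\rangle}$, $\overline{\Delta}_{\mathrm{SJL},L^2}(x,y) = 1 - \frac{\langle x,y\rangle}{\|x\|_2^2+\|y\|_2^2-\langle x,y\rangle}$. All these denominators vanish only when $x=y=0$; by convention each of these functions takes the value $0$ at $(x,y)=(0,0)$. A mapping $f: M\times M\to\mathbb{R}$ is a metric on $M$ if for all $a,b,c\in M$: $f(a,a)=0$; $a\neq b \Rightarrow f(a,b)>0$; $f(a,b)=f(b,a)$; and $f(a,c)\le f(a,b)+f(b,c)$.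 *)

From HB Require Import structures.
From mathcomp Require Import all_boot all_order all_algebra.
From mathcomp Require Import reals.
Set Implicit Arguments. Unset Strict Implicit. Unset Printing Implicit Defensive.
Import Order.TTheory GRing.Theory Num.Theory.
Local Open Scope ring_scope.

Section Defs.
Variables (R : realType) (p : nat).
Implicit Types x y : 'rV[R]_p.

Definition in_cube x : Prop := forall i : 'I_p, 0 <= x 0 i <= 1.

Definition norm1 x : R := \sum_(i < p) `|x 0 i|.
Definition norm2sq x : R := \sum_(i < p) x 0 i ^+ 2.
Definition dotp x y : R := \sum_(i < p) x 0 i * y 0 i.

(* each distance is 0 at (0,0) by convention *)
Definition dJML1 x y : R :=
  if (x == 0) && (y == 0) then 0 else
  1 - (norm1 x + norm1 y - norm1 (x - y)) / (norm1 x + norm1 y + norm1 (x - y)).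

Definition dJML2 x y : R :=
  if (x == 0) && (y == 0) then 0 else
  1 - dotp x y / (dotp x y + norm1 (x - y)).

Definition dSJL1 x y : R :=
  if (x == 0) && (y == 0) then 0 else
  1 - dotp x y / (norm1 x + norm1 y - dotp x y).

Definition dSJL2 x y : R :=
  if (x == 0) && (y == 0) then 0 else
  1 - dotp x y / (norm2sq x + norm2sq y - dotp x y).

End Defs.

Definition is_metric_on (T : Type) (R : realType) (M : T -> Prop)
    (f : T -> T -> R) : Prop :=
  (forall a, M a -> f a a = 0) /\
  (forall a b, M a -> M b -> a <> b -> 0 < f a b) /\
  (forall a b, M a -> M b -> f a b = f b a) /\
  (forall a b c, M a -> M b -> M c -> f a c <= f a b + f b c).

(* Both Jaccard-type distances have the shape k * d / (q + d), where d is the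
   l1 distance and the "overlap" q (|x|_1 + |y|_1 for JML1, <x,y> for JML2 on
   the cube) is nonnegative, symmetric and 1-Lipschitz with respect to d in
   each argument.  Since t |-> t / (q + t) is increasing and a larger
   denominator only decreases d / (q + d), the triangle inequality for d
   transfers to the quotient.  The soft Jaccard distances fail on constant
   vectors: with L1 normalisation the diagonal value at (1/2,...,1/2) is 2/3,
   and with L2 normalisation the points 1, 1/2, 1/4 have distances
   9/13 > 1/3 + 1/3. *)
From HB Require Import structures.
From mathcomp Require Import all_boot all_order all_algebra.
From mathcomp Require Import reals ring lra.
Import Order.TTheory GRing.Theory Num.Theory.
Local Open Scope ring_scope.

Section RatioInequalities.
Variable R : realFieldType.

Lemma ler_ratio_num {q s t : R} : 0 <= q -> 0 <= s -> s <= t ->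
  s / (q + s) <= t / (q + t).
Proof.
move=> q0 s0 st.
have [->|qs_neq0] := eqVneq (q + s) 0.
  by rewrite invr0 mulr0 divr_ge0 //; lra.
have qs_gt0 : 0 < q + s by rewrite lt_def qs_neq0 /=; lra.
have qt_gt0 : 0 < q + t by lra.
by rewrite ler_pdivrMr // mulrAC ler_pdivlMr //; nra.
Qed.

Lemma ler_ratio_den {q t D : R} : 0 <= q -> 0 <= t -> q + t <= D ->
  t / D <= t / (q + t).
Proof.
move=> q0 t0 qtD.
have [->|t_neq0] := eqVneq t 0; first by rewrite !mul0r.
have t_gt0 : 0 < t by rewrite lt_def t_neq0.
have qt_gt0 : 0 < q + t by lra.
have D_gt0 : 0 < D by lra.
by rewrite ler_pdivrMr // mulrAC ler_pdivlMr //; nra.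
Qed.

Lemma ratio_triangle (a b c qab qbc qac : R) :
  0 <= a -> 0 <= b -> 0 <= c -> 0 <= qab -> 0 <= qbc -> 0 <= qac ->
  c <= a + b -> qab <= qac + b -> qbc <= qac + a ->
  c / (qac + c) <= a / (qab + a) + b / (qbc + b).
Proof.
move=> a0 b0 c0 qab0 qbc0 qac0 cab qab_le qbc_le.
apply: (le_trans (ler_ratio_num qac0 c0 cab)).
rewrite addrA mulrDl; apply: lerD; apply: ler_ratio_den => //; lra.
Qed.

End RatioInequalities.

Section MetricTransforms.
Variables (T : Type) (R : realType) (M : T -> Prop).

Lemma is_metric_on_ext (f g : T -> T -> R) :
  (forall a b, M a -> M b -> f a b = g a b) ->
  is_metric_on M g -> is_metric_on M f.
Proof.
move=> fg [g_refl [g_pos [g_sym g_tri]]]; split; [|split; [|split]].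
- by move=> a Ma; rewrite fg // g_refl.
- by move=> a b Ma Mb ab; rewrite fg // g_pos.
- by move=> a b Ma Mb; rewrite !fg // g_sym.
- by move=> a b c Ma Mb Mc; rewrite !fg // g_tri.
Qed.

Lemma is_metric_on_scale (k : R) (f : T -> T -> R) : 0 < k ->
  is_metric_on M f -> is_metric_on M (fun a b => k * f a b).
Proof.
move=> k_gt0 [f_refl [f_pos [f_sym f_tri]]]; split; [|split; [|split]].
- by move=> a Ma; rewrite f_refl // mulr0.
- by move=> a b Ma Mb ab; rewrite mulr_gt0 // f_pos.
- by move=> a b Ma Mb; rewrite f_sym.
- by move=> a b c Ma Mb Mc; rewrite -mulrDr ler_pM2l // f_tri.
Qed.

Lemma metric_ge0 (d : T -> T -> R) a b : is_metric_on M d -> M a -> M b ->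
  0 <= d a b.
Proof.
move=> [d_refl [_ [d_sym d_tri]]] Ma Mb.
have := d_tri a b a Ma Mb Ma; rewrite d_refl // (d_sym b a) //; lra.
Qed.

Variables (d q : T -> T -> R).
Hypotheses (d_metric : is_metric_on M d)
  (q_ge0 : forall a b, M a -> M b -> 0 <= q a b)
  (q_sym : forall a b, M a -> M b -> q a b = q b a)
  (q_lip : forall a b c, M a -> M b -> M c -> q a b <= q a c + d b c).

Lemma is_metric_on_ratio : is_metric_on M (fun a b => d a b / (q a b + d a b)).
Proof.
have d_ge0 a b : M a -> M b -> 0 <= d a b by exact: metric_ge0.
case: d_metric => [d_refl [d_pos [d_sym d_tri]]]; split; [|split; [|split]].
- by move=> a Ma; rewrite d_refl // mul0r.
- move=> a b Ma Mb ab; have dab := d_pos a b Ma Mb ab.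
  by rewrite divr_gt0 //; have := q_ge0 _ _ Ma Mb; lra.
- by move=> a b Ma Mb; rewrite d_sym // q_sym.
- move=> a b c Ma Mb Mc; apply: ratio_triangle; rewrite ?d_ge0 ?q_ge0 ?d_tri //.
  + exact: q_lip.
  + by rewrite (q_sym b) // (q_sym a) // (d_sym a) // q_lip.
Qed.

End MetricTransforms.

Section JaccardMetrics.
Variables (R : realType) (p : nat).
Implicit Types x y z : 'rV[R]_p.

Lemma norm1_ge0 x : 0 <= norm1 x.
Proof. exact: sumr_ge0. Qed.

Lemma norm1_eq0 x : norm1 x = 0 -> x = 0.
Proof.
move=> x0; apply/matrixP => i j; rewrite (ord1 i) mxE; apply/normr0_eq0.
exact: (psumr_eq0P _ x0).
Qed.

Lemma norm1_0 : norm1 (0 : 'rV[R]_p) = 0.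
Proof. by rewrite /norm1 big1 // => i _; rewrite mxE normr0. Qed.

Lemma norm1_distC x y : norm1 (x - y) = norm1 (y - x).
Proof. by apply: eq_bigr => i _; rewrite !mxE distrC. Qed.

Lemma norm1_le_dist y z : norm1 y <= norm1 z + norm1 (y - z).
Proof.
rewrite /norm1 -big_split; apply: ler_sum => i _ /=; rewrite !mxE.
by have := ler_normD (y 0 i - z 0 i) (z 0 i); rewrite subrK addrC.
Qed.

Lemma is_metric_on_norm1_dist (M : 'rV[R]_p -> Prop) :
  is_metric_on M (fun x y => norm1 (x - y)).
Proof.
split; [|split; [|split]].
- by move=> x _; rewrite subrr norm1_0.
- move=> x y _ _ xy; rewrite lt_def norm1_ge0 andbT.
  by apply/eqP => /norm1_eq0 /eqP; rewrite subr_eq0 => /eqP.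
- by move=> x y _ _; rewrite norm1_distC.
- move=> x y z _ _ _; rewrite /norm1 -big_split; apply: ler_sum => i _.
  by rewrite !mxE ler_distD.
Qed.

Lemma dJML1_ratio x y :
  dJML1 x y = 2 * (norm1 (x - y) / (norm1 x + norm1 y + norm1 (x - y))).
Proof.
rewrite /dJML1; case: ifP => [/andP[/eqP-> /eqP->]|xy_neq0].
  by rewrite subr0 norm1_0 !mul0r mulr0.
have nx := norm1_ge0 x; have ny := norm1_ge0 y; have nxy := norm1_ge0 (x - y).
have den_neq0 : norm1 x + norm1 y + norm1 (x - y) != 0.
  apply/eqP => den0; have /norm1_eq0 x0 : norm1 x = 0 by lra.
  have /norm1_eq0 y0 : norm1 y = 0 by lra.
  by move: xy_neq0; rewrite x0 y0 eqxx.
by field.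
Qed.

Lemma is_metric_on_dJML1 (M : 'rV[R]_p -> Prop) : is_metric_on M (@dJML1 R p).
Proof.
apply: is_metric_on_ext (fun x y _ _ => dJML1_ratio x y) _.
apply: is_metric_on_scale => //; apply: is_metric_on_ratio.
- exact: is_metric_on_norm1_dist.
- by move=> x y _ _; rewrite addr_ge0 ?norm1_ge0.
- by move=> x y _ _; rewrite addrC.
- by move=> x y z _ _ _; rewrite -addrA lerD2l norm1_le_dist.
Qed.

Lemma dotpC x y : dotp x y = dotp y x.
Proof. by apply: eq_bigr => i _; rewrite mulrC. Qed.

Lemma dotpp_eq0 x : dotp x x = 0 -> x = 0.
Proof.
move=> xx0; apply/matrixP => i j; rewrite (ord1 i) mxE; apply/eqP.
rewrite -[_ == 0]orbb -mulf_eq0; apply/eqP/(psumr_eq0P _ xx0) => // k _.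
by rewrite -expr2 sqr_ge0.
Qed.

Lemma dotp_ge0 x y : in_cube x -> in_cube y -> 0 <= dotp x y.
Proof.
move=> x01 y01; apply: sumr_ge0 => i _.
by case/andP: (x01 i) => ? _; case/andP: (y01 i) => ? _; rewrite mulr_ge0.
Qed.

Lemma dotp_le_dist x y z : in_cube x -> dotp x y <= dotp x z + norm1 (y - z).
Proof.
move=> x01; rewrite /dotp /norm1 -big_split; apply: ler_sum => i _ /=.
rewrite !mxE; have /andP[xi0 xi1] := x01 i.
have := ler_norm (y 0 i - z 0 i); have := normr_ge0 (y 0 i - z 0 i); nra.
Qed.

Lemma dJML2_ratio x y : in_cube x -> in_cube y ->
  dJML2 x y = norm1 (x - y) / (dotp x y + norm1 (x - y)).
Proof.
move=> x01 y01; rewrite /dJML2; case: ifP => [/andP[/eqP-> /eqP->]|xy_neq0].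
  by rewrite subr0 norm1_0 mul0r.
have nxy := norm1_ge0 (x - y); have pxy := dotp_ge0 _ _ x01 y01.
have den_neq0 : dotp x y + norm1 (x - y) != 0.
  apply/eqP => den0; have /norm1_eq0/eqP : norm1 (x - y) = 0 by lra.
  rewrite subr_eq0 => /eqP xy.
  have /dotpp_eq0 x0 : dotp x x = 0 by rewrite {2}xy; lra.
  by move: xy_neq0; rewrite -xy x0 eqxx.
by field.
Qed.

Lemma is_metric_on_dJML2 : is_metric_on (@in_cube R p) (@dJML2 R p).
Proof.
apply: is_metric_on_ext dJML2_ratio _; apply: is_metric_on_ratio.
- exact: is_metric_on_norm1_dist.
- by move=> x y; apply: dotp_ge0.
- by move=> x y _ _; rewrite dotpC.
- by move=> x y z x01 _ _; apply: dotp_le_dist.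
Qed.

End JaccardMetrics.

Section SoftJaccardCounterexamples.
Variables (R : realType) (p : nat).
Hypothesis p_gt0 : (0 < p)%N.

Let cst (t : R) : 'rV[R]_p := const_mx t.

Lemma in_cube_const t : 0 <= t <= 1 -> in_cube (cst t).
Proof. by move=> t01 i; rewrite mxE. Qed.

Lemma const_mx_eq0 t : (cst t == 0) = (t == 0).
Proof.
apply/eqP/eqP => [/matrixP/(_ 0 (Ordinal p_gt0))|->]; first by rewrite !mxE.
by apply/matrixP => i j; rewrite !mxE.
Qed.

Lemma dotp_const s t : dotp (cst s) (cst t) = s * t * p%:R.
Proof.
rewrite /dotp (eq_bigr (fun=> s * t)) => [|i _]; last by rewrite !mxE.
by rewrite sumr_const card_ord mulr_natr.
Qed.

Lemma norm1_const t : norm1 (cst t) = `|t| * p%:R.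
Proof.
rewrite /norm1 (eq_bigr (fun=> `|t|)) => [|i _]; last by rewrite !mxE.
by rewrite sumr_const card_ord mulr_natr.
Qed.

Lemma norm2sq_const t : norm2sq (cst t) = t ^+ 2 * p%:R.
Proof.
rewrite /norm2sq (eq_bigr (fun=> t ^+ 2)) => [|i _]; last by rewrite !mxE.
by rewrite sumr_const card_ord mulr_natr.
Qed.

Lemma dSJL1_const_diag t : 0 < t < 2 ->
  dSJL1 (cst t) (cst t) = 2 * (1 - t) / (2 - t).
Proof.
move=> /andP[t_gt0 t_lt2]; have p_pos : 0 < p%:R :> R by rewrite ltr0n.
rewrite /dSJL1 const_mx_eq0 gt_eqF //= dotp_const norm1_const gtr0_norm //.
have -> : t * p%:R + t * p%:R - t * t * p%:R = t * p%:R * (2 - t) by ring.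
by field; rewrite !gt_eqF // subr_gt0.
Qed.

Lemma dSJL2_const s t : s != 0 ->
  dSJL2 (cst s) (cst t) = (s - t) ^+ 2 / (s ^+ 2 + t ^+ 2 - s * t).
Proof.
move=> s_neq0; have p_pos : 0 < p%:R :> R by rewrite ltr0n.
have den_gt0 : 0 < s ^+ 2 + t ^+ 2 - s * t.
  have s2_gt0 : 0 < s ^+ 2 by rewrite lt_def sqrf_eq0 s_neq0 sqr_ge0.
  have := sqr_ge0 (2 * t - s); nra.
rewrite /dSJL2 const_mx_eq0 (negbTE s_neq0) /= dotp_const !norm2sq_const.
have -> : s ^+ 2 * p%:R + t ^+ 2 * p%:R - s * t * p%:R =
  (s ^+ 2 + t ^+ 2 - s * t) * p%:R by ring.
by field; rewrite !gt_eqF.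
Qed.

Lemma not_metric_dSJL1 : ~ is_metric_on (@in_cube R p) (@dSJL1 R p).
Proof.
case=> dSJL1_refl _.
have half01 : 0 <= (2^-1 : R) <= 1 by apply/andP; split; lra.
have := dSJL1_refl _ (in_cube_const _ half01).
rewrite dSJL1_const_diag; last by apply/andP; split; lra.
by apply/eqP; rewrite mulf_neq0 ?invr_eq0 //; lra.
Qed.

Lemma not_metric_dSJL2 : ~ is_metric_on (@in_cube R p) (@dSJL2 R p).
Proof.
case=> _ [_ [_ dSJL2_tri]].
have := dSJL2_tri (cst 1) (cst 2^-1) (cst 4^-1).
rewrite !dSJL2_const ?oner_eq0 ?invr_eq0 ?pnatr_eq0 //.
have -> : (1 - 4^-1) ^+ 2 / (1 ^+ 2 + 4^-1 ^+ 2 - 1 / 4) = 9 / 13 :> R by field.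
have -> : (1 - 2^-1) ^+ 2 / (1 ^+ 2 + 2^-1 ^+ 2 - 1 / 2) = 3^-1 :> R by field.
have -> : (2^-1 - 4^-1) ^+ 2 / (2^-1 ^+ 2 + 4^-1 ^+ 2 - 2^-1 / 4) = 3^-1 :> R.
  by field.
move=> tri; suff : 9 / 13 <= 3^-1 + 3^-1 :> R by lra.
by apply: tri; apply: in_cube_const; apply/andP; split; lra.
Qed.

End SoftJaccardCounterexamples.

Theorem theorem1 (R : realType) (p : nat) (hp : (1 <= p)%N) :
  is_metric_on (@in_cube R p) (@dJML1 R p) /\
  is_metric_on (@in_cube R p) (@dJML2 R p) /\
  ~ is_metric_on (@in_cube R p) (@dSJL1 R p) /\
  ~ is_metric_on (@in_cube R p) (@dSJL2 R p).
Proof.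
split; first exact: is_metric_on_dJML1.
split; first exact: is_metric_on_dJML2.
by split; [exact: not_metric_dSJL1 | exact: not_metric_dSJL2].
Qed.
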